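(* For every positive integer $k$: (1) $\lim_{x\to\infty}F^k(x)=k^2-1$; (2) if $k\geq 2$, then $F^k$ is concave down on the interval $(2(k-1),\infty)$; (3) if $k\geq 3$, then $F^k(2(k-1))=F^{k-2}(2(k-1))$.
   Context: For a positive integer $k$, define $F^k:(0,\infty)\to\mathbb{R}$ by $F^k(x)=\delta_0^k(x)-k(x-k)-1$, where $\delta_0^k(x)=2x\sum_{j=1}^{k/2}\cos\left(\frac{(k-(2j-1))\pi}{x}\right)$ if $k$ is even, and $\delta_0^k(x)=x+2x\sum_{j=1}^{(k-1)/2}\cos\left(\frac{(k-(2j-1))\pi}{x}\right)$ if $k$ is odd (an empty sum is $0$). *)

From Stdlib Require Import Reals Lra Lia.
From Coquelicot Require Import Coquelicot.
Open Scope R_scope.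

Fixpoint sum_1_to (n : nat) (f : nat -> R) : R :=
  match n with
  | O => 0
  | S n' => sum_1_to n' f + f n
  end.

Definition cos_term (k : nat) (x : R) (j : nat) : R :=
  cos ((INR k - (2 * INR j - 1)) * PI / x).

Definition delta0 (k : nat) (x : R) : R :=
  if Nat.even k
  then 2 * x * sum_1_to (k / 2) (cos_term k x)
  else x + 2 * x * sum_1_to ((k - 1) / 2) (cos_term k x).

Definition F (k : nat) (x : R) : R :=
  delta0 k x - INR k * (x - INR k) - 1.

Definition concave_on (I : R -> Prop) (f : R -> R) : Prop :=
  forall x y t, I x -> I y -> 0 <= t <= 1 ->
    t * f x + (1 - t) * f y <= f (t * x + (1 - t) * y).

(** Write [F^k] through the half-sum [h = k/2]: since [k = 2h + (k mod 2)],
    [F^k(x) = k^2 - 1 + 2 sum_{j=1}^{h} x (cos(c_j/x) - 1)] with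
    [c_j = (k - 2j + 1) pi].  Each summand tends to [0] at infinity, as
    [0 <= 1 - cos v <= v^2/2], and is concave on [x > 2(k-1)], where its second
    derivative [-c_j^2 cos(c_j/x) / x^3] is nonpositive because
    [c_j/x <= pi/2].  Finally [delta_0^k] differs from [delta_0^(k-2)] by the
    single term [2x cos((k-1) pi/x)], which vanishes at [x = 2(k-1)]. *)

From Pilot Require Import Defs.
From Stdlib Require Import Reals Lra Lia.
From Coquelicot Require Import Coquelicot.
Open Scope R_scope.

Lemma sum_1_to_ext n f g :
  (forall j, (1 <= j <= n)%nat -> f j = g j) -> sum_1_to n f = sum_1_to n g.
Proof.
  induction n as [|n IHn]; intros Hfg; simpl; [reflexivity|].
  rewrite IHn, Hfg; [reflexivity | lia | intros j Hj; apply Hfg; lia].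
Qed.

Lemma sum_1_to_succ_l n f :
  sum_1_to (S n) f = f 1%nat + sum_1_to n (fun j => f (S j)).
Proof.
  induction n as [|n IHn]; [simpl; ring|].
  change (sum_1_to (S (S n)) f) with (sum_1_to (S n) f + f (S (S n))).
  rewrite IHn; simpl; ring.
Qed.

Lemma sum_1_to_mul_sub1 x n f :
  sum_1_to n (fun j => x * (f j - 1)) = x * sum_1_to n f - INR n * x.
Proof.
  induction n as [|n IHn]; simpl sum_1_to; [simpl; ring|].
  rewrite IHn, S_INR; ring.
Qed.

Lemma is_lim_sum_1_to_0 n (g : nat -> R -> R) :
  (forall j, is_lim (g j) p_infty 0) ->
  is_lim (fun x => sum_1_to n (fun j => g j x)) p_infty 0.
Proof.
  intros Hg; induction n as [|n IHn]; simpl; [apply is_lim_const|].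
  replace (Finite 0) with (Finite (0 + 0)) by (f_equal; ring).
  now apply is_lim_plus'.
Qed.

Lemma concave_on_ext I f g :
  (forall x, f x = g x) -> concave_on I f -> concave_on I g.
Proof. intros Efg Hf x y t Hx Hy Ht; rewrite <- !Efg; now apply Hf. Qed.

Lemma concave_on_plus I f g :
  concave_on I f -> concave_on I g -> concave_on I (fun x => f x + g x).
Proof.
  intros Hf Hg x y t Hx Hy Ht.
  specialize (Hf x y t Hx Hy Ht); specialize (Hg x y t Hx Hy Ht); lra.
Qed.

Lemma concave_on_const I b : concave_on I (fun _ => b).
Proof. intros x y t _ _ _; right; ring. Qed.

Lemma concave_on_scal I a f :
  0 <= a -> concave_on I f -> concave_on I (fun x => a * f x).
Proof.
  intros Ha Hf x y t Hx Hy Ht.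
  replace (t * (a * f x) + (1 - t) * (a * f y))
    with (a * (t * f x + (1 - t) * f y)) by ring.
  apply Rmult_le_compat_l; auto.
Qed.

Lemma concave_on_sum_1_to I n (g : nat -> R -> R) :
  (forall j, (1 <= j <= n)%nat -> concave_on I (g j)) ->
  concave_on I (fun x => sum_1_to n (fun j => g j x)).
Proof.
  induction n as [|n IHn]; intros Hg; simpl; [apply concave_on_const|].
  apply concave_on_plus; [apply IHn; intros j Hj | ]; apply Hg; lia.
Qed.

Lemma MVT_right_of (m : R) f df a b :
  (forall x, m < x -> is_derive f x (df x)) -> m < a -> a <= b ->
  exists c, a <= c <= b /\ f b - f a = df c * (b - a).
Proof.
  intros Hf Ha Hab.
  destruct (MVT_gen f a b df) as [c [Hc E]].
  - intros x Hx; apply Hf; unfold Rmin in Hx; destruct (Rle_dec a b); lra.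
  - intros x Hx; apply continuity_pt_filterlim.
    apply (ex_derive_continuous (K := R_AbsRing) (V := R_NormedModule)).
    exists (df x); apply Hf; unfold Rmin in Hx; destruct (Rle_dec a b); lra.
  - exists c; unfold Rmin, Rmax in Hc; destruct (Rle_dec a b); [|lra].
    split; [lra | exact E].
Qed.

Section DerivativeCriteria.

Variables (m : R) (f df : R -> R).
Hypothesis f_derive : forall x, m < x -> is_derive f x (df x).

Lemma nonincreasing_of_derive_nonpos :
  (forall x, m < x -> df x <= 0) -> forall a b, m < a -> a <= b -> f b <= f a.
Proof.
  intros Hdf a b Ha Hab.
  destruct (MVT_right_of m f df a b f_derive Ha Hab) as [c [Hc E]].
  assert (df c * (b - a) <= 0) by (apply Rmult_le_0_r; [apply Hdf | ]; lra).
  lra.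
Qed.

Lemma concave_on_of_derive_nonincreasing :
  (forall a b, m < a -> a <= b -> df b <= df a) -> concave_on (fun x => m < x) f.
Proof.
  intros Hdf.
  assert (Hle : forall u v s, m < u -> u <= v -> 0 <= s <= 1 ->
            s * f u + (1 - s) * f v <= f (s * u + (1 - s) * v)).
  { intros u v s Hu Huv Hs.
    set (w := s * u + (1 - s) * v).
    destruct (MVT_right_of m f df u w f_derive Hu ltac:(unfold w; nra))
      as [c1 [Hc1 E1]].
    destruct (MVT_right_of m f df w v f_derive ltac:(unfold w; nra)
                ltac:(unfold w; nra)) as [c2 [Hc2 E2]].
    assert (Hslope : df c2 <= df c1) by (apply Hdf; lra).
    assert (Hw : 0 <= s * (1 - s) * (v - u)) by (apply Rmult_le_pos; nra).
    assert (s * f u + (1 - s) * f v - f w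
            = s * (1 - s) * (v - u) * (df c2 - df c1)).
    { replace (s * f u + (1 - s) * f v - f w)
        with (- s * (f w - f u) + (1 - s) * (f v - f w)) by ring.
      rewrite E1, E2; unfold w; ring. }
    nra. }
  intros x y t Hx Hy Ht; destruct (Rle_dec x y) as [Hxy|Hxy].
  - now apply Hle.
  - replace (t * x + (1 - t) * y) with ((1 - t) * y + (1 - (1 - t)) * x) by ring.
    replace (t * f x + (1 - t) * f y)
      with ((1 - t) * f y + (1 - (1 - t)) * f x) by ring.
    apply Hle; lra.
Qed.

End DerivativeCriteria.

Lemma sin_sqr_le v : sin v * sin v <= v * v.
Proof.
  assert (Hpos : forall v, 0 <= v -> sin v * sin v <= v * v).
  { clear v; intros v Hv.
    assert (sin v <= v).
    { destruct (Req_dec v 0) as [->|]; [rewrite sin_0; lra|].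
      left; apply sin_lt_x; lra. }
    assert (- v <= sin v).
    { destruct (Rle_dec 1 v); [pose proof (SIN_bound v); lra|].
      assert (0 <= sin v) by (apply sin_ge_0; pose proof PI2_1; lra).
      lra. }
    nra. }
  destruct (Rle_dec 0 v); [now apply Hpos|].
  replace v with (- - v) by ring; rewrite sin_neg.
  specialize (Hpos (- v)); nra.
Qed.

Lemma is_lim_mul_cos_inv_sub1 c :
  is_lim (fun x => x * (cos (c / x) - 1)) p_infty 0.
Proof.
  apply is_lim_le_le_loc with (f := fun x => - (c * c / 2) * / x) (g := fun _ => 0).
  - exists 0; intros x Hx.
    assert (E : cos (c / x) = 1 - 2 * sin (c / x / 2) * sin (c / x / 2)).
    { rewrite <- cos_2a_sin; f_equal; field; lra. }
    pose proof (sin_sqr_le (c / x / 2)).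
    assert (0 <= sin (c / x / 2) * sin (c / x / 2)) by nra.
    rewrite E; split; [|nra].
    replace (x * (1 - 2 * sin (c / x / 2) * sin (c / x / 2) - 1))
      with (- (2 * x) * (sin (c / x / 2) * sin (c / x / 2))) by ring.
    replace (- (c * c / 2) * / x)
      with (- (2 * x) * (c / x / 2 * (c / x / 2))) by (field; lra).
    nra.
  - replace (Finite 0) with (Rbar_mult (- (c * c / 2)) (Rbar_inv p_infty))
      by (simpl; f_equal; ring).
    apply is_lim_scal_l, is_lim_inv; [apply is_lim_id | discriminate].
  - apply is_lim_const.
Qed.

Lemma concave_on_mul_cos_inv_sub1 (m c : R) :
  0 <= m -> 0 <= c -> 2 * c <= m * PI ->
  concave_on (fun x => m < x) (fun x => x * (cos (c / x) - 1)).
Proof.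
  intros Hm Hc Hcm.
  apply concave_on_of_derive_nonincreasing
    with (df := fun x => cos (c / x) - 1 + c / x * sin (c / x)).
  { intros x Hx; auto_derive; [lra | unfold Rdiv; field; lra]. }
  apply nonincreasing_of_derive_nonpos
    with (df := fun x => - (c * c / (x * x * x)) * cos (c / x)).
  { intros x Hx; auto_derive; [lra | unfold Rdiv; field; lra]. }
  intros x Hx.
  assert (0 <= c / x) by (apply Rdiv_le_0_compat; lra).
  assert (c / x <= PI / 2).
  { apply Rmult_le_reg_r with (2 * x); [lra|].
    replace (c / x * (2 * x)) with (2 * c) by (field; lra).
    pose proof PI_RGT_0; nra. }
  assert (0 <= cos (c / x)) by (apply cos_ge_0; lra).
  assert (0 <= c * c / (x * x * x)).
  { apply Rdiv_le_0_compat; [nra|]. assert (0 < x * x) by nra. nra. }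
  nra.
Qed.

(* [Defs.] disambiguates from Stdlib's [Rtrigo_alt.cos_term]. *)
Lemma delta0_half k x :
  delta0 k x = INR (k mod 2) * x + 2 * x * sum_1_to (k / 2) (Defs.cos_term k x).
Proof.
  unfold delta0; destruct (Nat.Even_or_Odd k) as [[p ->]|[p ->]].
  - rewrite Nat.even_mul.
    replace (2 * p / 2)%nat with p by (rewrite Nat.mul_comm, Nat.div_mul; lia).
    replace (2 * p mod 2)%nat with 0%nat
      by (rewrite Nat.mul_comm, Nat.Div0.mod_mul; reflexivity).
    simpl; ring.
  - rewrite Nat.even_add, Nat.even_mul.
    replace (2 * p + 1)%nat with (1 + p * 2)%nat by lia.
    rewrite Nat.div_add, Nat.Div0.mod_add by lia.
    replace (1 + p * 2 - 1)%nat with (p * 2)%nat by lia.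
    rewrite Nat.div_mul by lia.
    simpl; ring.
Qed.

Lemma INR_half k : INR k = 2 * INR (k / 2) + INR (k mod 2).
Proof.
  rewrite (Nat.div_mod_eq k 2) at 1.
  rewrite plus_INR, mult_INR; simpl; ring.
Qed.

Lemma F_half k x :
  F k x = 2 * sum_1_to (k / 2) (fun j => x * (Defs.cos_term k x j - 1)) + (INR k ^ 2 - 1).
Proof.
  unfold F; rewrite delta0_half, sum_1_to_mul_sub1.
  rewrite (INR_half k); ring.
Qed.

Lemma cos_term_SS n x j : Defs.cos_term (S (S n)) x (S j) = Defs.cos_term n x j.
Proof.
  unfold Defs.cos_term; rewrite !S_INR.
  now replace (INR n + 1 + 1 - (2 * (INR j + 1) - 1)) with (INR n - (2 * INR j - 1)) by ring.
Qed.

Lemma delta0_SS n x :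
  delta0 (S (S n)) x = delta0 n x + 2 * x * Defs.cos_term (S (S n)) x 1.
Proof.
  assert (Hmod : (S (S n) mod 2 = n mod 2)%nat).
  { replace (S (S n)) with (n + 1 * 2)%nat by lia; apply Nat.Div0.mod_add. }
  assert (Hdiv : (S (S n) / 2 = S (n / 2))%nat).
  { replace (S (S n)) with (n + 1 * 2)%nat by lia; rewrite Nat.div_add; lia. }
  rewrite !delta0_half, Hmod, Hdiv, sum_1_to_succ_l.
  rewrite (sum_1_to_ext _ _ (Defs.cos_term n x)) by (intros; apply cos_term_SS).
  ring.
Qed.

Lemma is_lim_F k : is_lim (F k) p_infty (INR k ^ 2 - 1).
Proof.
  apply is_lim_ext with
    (f := fun x => 2 * sum_1_to (k / 2) (fun j => x * (Defs.cos_term k x j - 1))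
                   + (INR k ^ 2 - 1)).
  { intros x; symmetry; apply F_half. }
  replace (Finite (INR k ^ 2 - 1)) with (Finite (2 * 0 + (INR k ^ 2 - 1)))
    by (f_equal; ring).
  apply is_lim_plus'; [|apply is_lim_const].
  apply (is_lim_scal_l _ 2 _ 0), is_lim_sum_1_to_0.
  intros j; apply is_lim_mul_cos_inv_sub1.
Qed.

Lemma concave_on_cos_term k j :
  (1 <= j)%nat -> (2 * j <= k)%nat ->
  concave_on (fun x => 2 * (INR k - 1) < x) (fun x => x * (Defs.cos_term k x j - 1)).
Proof.
  intros Hj Hjk.
  assert (1 <= INR j) by (apply (le_INR 1); exact Hj).
  assert (2 * INR j <= INR k)
    by (replace (2 * INR j) with (INR (2 * j)) by (rewrite mult_INR; simpl; ring);
        now apply le_INR).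
  pose proof PI_RGT_0.
  apply concave_on_mul_cos_inv_sub1; [lra | apply Rmult_le_pos; lra | nra].
Qed.

Lemma concave_on_F k : concave_on (fun x => 2 * (INR k - 1) < x) (F k).
Proof.
  apply concave_on_ext with
    (f := fun x => 2 * sum_1_to (k / 2) (fun j => x * (Defs.cos_term k x j - 1))
                   + (INR k ^ 2 - 1)).
  { intros x; symmetry; apply F_half. }
  apply concave_on_plus; [|apply concave_on_const].
  apply concave_on_scal; [lra|].
  apply concave_on_sum_1_to; intros j Hj.
  apply concave_on_cos_term; [|pose proof (Nat.Div0.mul_div_le k 2)]; lia.
Qed.

Lemma F_SS_eq n : F (S (S n)) (2 * (INR n + 1)) = F n (2 * (INR n + 1)).
Proof.
  assert (Hcos : Defs.cos_term (S (S n)) (2 * (INR n + 1)) 1 = 0).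
  { unfold Defs.cos_term; rewrite <- cos_PI2; f_equal.
    rewrite !S_INR; simpl INR; field.
    pose proof (pos_INR n); lra. }
  unfold F; rewrite delta0_SS, Hcos, !S_INR; ring.
Qed.

Theorem lemma3p3 (k : nat) (hk : (1 <= k)%nat) :
  is_lim (F k) p_infty (INR k ^ 2 - 1)
  /\ ((2 <= k)%nat ->
        concave_on (fun x => 2 * (INR k - 1) < x) (F k))
  /\ ((3 <= k)%nat ->
        F k (2 * (INR k - 1)) = F (k - 2) (2 * (INR k - 1))).
Proof.
  (* Parts 1 and 2 hold for every [k]. *)
  split; [apply is_lim_F | split; [intros _; apply concave_on_F |]].
  intros Hk; destruct k as [|[|n]]; [lia | lia |].
  replace (S (S n) - 2)%nat with n by lia.
  replace (2 * (INR (S (S n)) - 1)) with (2 * (INR n + 1)) by (rewrite !S_INR; ring).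
  apply F_SS_eq.
Qed.
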